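(* Let $x\in\Gamma$ and let $r$ be an eigenvalue of the finite symmetric matrix $J_x$. Then at least one of the following holds: (a) $P_{x,x'}(r)=0$; (b) there exist a vertex $y\in\Gamma_x$ and two distinct vertices $y_1,y_2\in N_y$ such that $P_{y_1,y}(r)=P_{y_2,y}(r)=0$.
   Context: Let $\Gamma$ be an infinite connected tree whose vertices are arranged in levels $\ell(x)\in\{0,1,2,\dots\}$: every vertex $x$ is adjacent to exactly one vertex $x'$ with $\ell(x')=\ell(x)+1$; for $\ell(x)\ge 1$ the set $N_x=\{y:\ y'=x\}$ of neighbours of $x$ on level $\ell(x)-1$ is finite and nonempty; $N_x=\emptyset$ if $\ell(x)=0$; there are no other edges. For $x\in\Gamma$, $\Gamma_x$ is the finite subtree consisting of $x$ and all its descendants, and $\Gamma'_x=\Gamma_x\cup\{x'\}$. Fix numbers $\lambda_x>0$ and $\beta_x\in\mathbb R$, $x\in\Gamma$. The Jacobi matrix $J$ acts on functions $v:\Gamma\to\mathbb C$ by $(Jv)(x)=\lambda_x v(x')+\beta_x v(x)+\sum_{y\in N_x}\lambda_y v(y)$. For $x\in\Gamma$, $J_x=P_xJP_x$ restricted to $\ell^2(\Gamma_x)$, where $P_x$ is the orthogonal projection of $\ell^2(\Gamma)$ onto $\ell^2(\Gamma_x)$; i.e. for $w:\Gamma_x\to\mathbb C$ and $t\in\Gamma_x$, $(J_xw)(t)=\beta_tw(t)+\sum_{s\in N_t}\lambda_sw(s)+\lambda_tw(t')$, where the last term is omitted when $t=x$. The polynomials $P_{x,t}$ ($x\in\Gamma$,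 $t\in\Gamma'_x$) are defined recursively on $\ell(x)$: if $\ell(x)=0$, $P_{x,x}=1$, $P_{x,x'}(z)=(z-\beta_x)/\lambda_x$. If $\ell(x)\ge1$: $P_{x,x}$ is the monic least common multiple of $\{P_{y,x}:\ y\in N_x\}$; for $y\in N_x$ and $t\in\Gamma_y$, $P_{x,t}=P_{x,x}P_{y,t}/P_{y,x}$; and $P_{x,x'}=\lambda_x^{-1}\big((z-\beta_x)P_{x,x}-\sum_{y\in N_x}\lambda_yP_{x,y}\big)$. (These are polynomials with real coefficients.) *)

From HB Require Import structures.
From mathcomp Require Import all_boot all_order all_algebra.
Set Implicit Arguments. Unset Strict Implicit. Unset Printing Implicit Defensive.
Import Order.TTheory GRing.Theory Num.Theory.
Local Open Scope ring_scope.

(* Level tree: vertices V, parent map par (x |-> x'), levels lev,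
   ch x = duplicate-free enumeration of N_x = {y | par y = x}. *)
Definition level_tree (V : eqType) (par : V -> V) (lev : V -> nat)
    (ch : V -> seq V) : Prop :=
  [/\ (forall x, lev (par x) = (lev x).+1)%N,
      (forall x, uniq (ch x)),
      (forall x y, (y \in ch x) = (par y == x)),
      (forall x, (0 < lev x)%N -> ch x != [::]) &
      (forall a b, exists m n, iter m par a = iter n par b)].

(* t is in Gamma_x (t is x or a descendant of x). *)
Definition in_sub (V : Type) (par : V -> V) (x t : V) : Prop :=
  exists k, iter k par t = x.

Section Polys.
Variable R : fieldType.

Definition lcmp2 (p q : {poly R}) : {poly R} := (p * q) %/ gcdp p q.
Definition mlcm (s : seq {poly R}) : {poly R} :=
  let l := foldr lcmp2 1 s in (lead_coef l)^-1 *: l.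

Variables (V : eqType) (par : V -> V) (lev : V -> nat) (ch : V -> seq V)
  (lam beta : V -> R).

(* Pol n x t = P_{x,t}, intended for n = lev x and t in Gamma'_x
   (value 0 / unspecified elsewhere). For t in Gamma_y, y in N_x,
   y is the ancestor of t at level lev x - 1 = n - 1. *)
Fixpoint Pol (n : nat) (x t : V) : {poly R} :=
  match n with
  | 0 => if t == x then 1
         else if t == par x then (lam x)^-1 *: ('X - (beta x)%:P)
         else 0
  | m.+1 =>
      let Pxx := mlcm [seq Pol m y x | y <- ch x] in
      let Pxt := fun y t => (Pxx * Pol m y t) %/ Pol m y x in
      if t == x then Pxx
      else if t == par x then
        (lam x)^-1 *: (('X - (beta x)%:P) * Pxx
                       - \sum_(y <- ch x) (lam y) *: Pxt y y)
      else Pxt (iter (m - lev t) par t) t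
  end.

Definition P (x t : V) : {poly R} := Pol (lev x) x t.

Definition eigenvalue_Jx (x : V) (r : R) : Prop :=
  exists w : V -> R,
    (forall t, ~ in_sub par x t -> w t = 0) /\
    (exists t, in_sub par x t /\ w t != 0) /\
    (forall t, in_sub par x t ->
       beta t * w t + \sum_(s <- ch t) lam s * w s
       + (if t == x then 0 else lam t * w (par t)) = r * w t).
End Polys.

From HB Require Import structures.
From mathcomp Require Import all_boot all_order all_algebra.
From mathcomp Require Import ring zify.
Import Order.TTheory GRing.Theory Num.Theory.
Local Open Scope ring_scope.
Set Implicit Arguments. Unset Strict Implicit.

(* For fixed x, the polynomials P_{x,t} satisfy the three-term recurrence of J
   at every t in Gamma_x, including t = x where the term lambda_x P_{x,x'}
   appears; so v(t) = P_{x,t}(r) solves (J - r) v = 0 on Gamma_x, with the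
   boundary value P_{x,x'}(r) at x'.  For an eigenvector w of J_x, the discrete
   Wronskian lambda_t (v(t') w(t) - w(t') v(t)) equals the sum of its values on
   the children of t; it therefore vanishes on the leaves and, by induction on
   the level, everywhere.  At t = x it is lambda_x P_{x,x'}(r) w(x), giving (a)
   when w(x) <> 0.  If w(x) = 0, pick a child y of x with w not identically 0 on
   Gamma_y.  If w(y) = 0 we recurse into Gamma_y, on which w restricts to an
   eigenvector of J_y.  Otherwise that restriction gives P_{y,x}(r) = 0, and the
   eigen-equation at x, sum_{s in N_x} lambda_s w(s) = 0, produces a second
   child y2 with w(y2) <> 0, hence P_{y2,x}(r) = 0: this is (b). *)

Lemma lcmp2_dvdl (R : fieldType) (p q : {poly R}) : p %| lcmp2 p q.
Proof.
rewrite /lcmp2; have [/eqP|g0] := eqVneq (gcdp p q) 0.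
  by rewrite gcdp_eq0 => /andP [/eqP -> /eqP ->]; rewrite mul0r div0p dvdpp.
by rewrite -divp_mulA ?dvdp_gcdr // dvdp_mulIl.
Qed.

Lemma lcmp2_dvdr (R : fieldType) (p q : {poly R}) : q %| lcmp2 p q.
Proof.
rewrite /lcmp2; have [/eqP|g0] := eqVneq (gcdp p q) 0.
  by rewrite gcdp_eq0 => /andP [/eqP -> /eqP ->]; rewrite mul0r div0p dvdpp.
by rewrite -divp_mulAC ?dvdp_gcdl // dvdp_mulIr.
Qed.

Lemma mlcm_dvd (R : fieldType) (s : seq {poly R}) p : p \in s -> p %| mlcm s.
Proof.
move=> ps; rewrite /mlcm -mul_polyC; apply: dvdp_trans (dvdp_mulIr _ _).
elim: s ps => [|a s IH] //=; rewrite inE => /orP [/eqP ->|/IH H].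
  exact: lcmp2_dvdl.
exact: dvdp_trans H (lcmp2_dvdr _ _).
Qed.

Lemma mlcm_nil (R : fieldType) : mlcm [::] = 1 :> {poly R}.
Proof. by rewrite /mlcm /= lead_coef1 invr1 scale1r. Qed.

Lemma sum_seq_eq0_other (M : nmodType) (I : eqType) (s : seq I) (F : I -> M) i :
  uniq s -> i \in s -> \sum_(j <- s) F j = 0 -> F i != 0 ->
  exists2 j, j \in s & (j != i) && (F j != 0).
Proof.
move=> us is0 sum0 Fi0; apply/hasP; apply: contraNT Fi0 => /hasPn others.
rewrite -sum0 (bigD1_seq i) //= big1_seq ?addr0 // => j /andP [ji js].
by apply/eqP; have := others j js; rewrite ji negbK.
Qed.

Section LevelTree.
Variables (V : eqType) (par : V -> V) (lev : V -> nat) (ch : V -> seq V).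
Hypothesis Htree : level_tree par lev ch.

Local Notation in_sub := (in_sub par).

Lemma lev_par x : lev (par x) = (lev x).+1. Proof. by case: Htree. Qed.

Lemma mem_ch x y : (y \in ch x) = (par y == x). Proof. by case: Htree. Qed.

Lemma uniq_ch x : uniq (ch x). Proof. by case: Htree. Qed.

Lemma lev_ch x y : y \in ch x -> lev x = (lev y).+1.
Proof. by rewrite mem_ch => /eqP <-; rewrite lev_par. Qed.

Lemma ch_lev0 x : lev x = 0%N -> ch x = [::].
Proof.
case: (ch x) (@lev_ch x) => [//|y s] /(_ y).
by rewrite inE eqxx => /(_ isT) ->.
Qed.

Lemma par_neq x : par x != x.
Proof. by apply/eqP => /(congr1 lev)/eqP; rewrite lev_par eqn_leq ltnn. Qed.

Lemma lev_iter k t : lev (iter k par t) = (lev t + k)%N.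
Proof. by elim: k => [|k IH] /=; rewrite ?addn0 // lev_par IH addnS. Qed.

Lemma in_sub_refl x : in_sub x x. Proof. by exists 0%N. Qed.

Lemma in_sub_trans x y t : in_sub x y -> in_sub y t -> in_sub x t.
Proof. by case=> a Ha [b Hb]; exists (a + b)%N; rewrite iterD Hb. Qed.

Lemma in_sub_ch x y : y \in ch x -> in_sub x y.
Proof. by rewrite mem_ch => /eqP pyx; exists 1%N. Qed.

Lemma in_sub_par x t : in_sub x (par t) -> in_sub x t.
Proof. by case=> k Hk; exists k.+1; rewrite iterSr. Qed.

Lemma in_sub_parW x t : in_sub x t -> t != x -> in_sub x (par t).
Proof.
case=> [[|k] Hk] tx; first by rewrite -Hk eqxx in tx.
by exists k; rewrite -iterSr.
Qed.

Lemma in_sub_lev x t :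
  in_sub x t -> (lev t <= lev x)%N /\ iter (lev x - lev t) par t = x.
Proof. by case=> k Hk; rewrite -Hk lev_iter leq_addr addKn. Qed.

Lemma in_sub_lt x t : in_sub x t -> t != x -> (lev t < lev x)%N.
Proof.
move=> /in_sub_lev [le_tx iter_tx] tx; rewrite ltn_neqAle le_tx andbT.
by apply: contraNneq tx => eq_lev; rewrite -iter_tx eq_lev subnn.
Qed.

Lemma not_in_sub_par x : ~ in_sub x (par x).
Proof. by move=> /in_sub_lev []; rewrite lev_par ltnn. Qed.

Lemma in_sub_child x t : in_sub x t -> t != x -> exists2 y, y \in ch x & in_sub y t.
Proof.
move=> xt tx; have [_ iter_tx] := in_sub_lev xt.
have := in_sub_lt xt tx; rewrite -subn_gt0 => /prednK k_eq.
exists (iter (lev x - lev t).-1 par t); last by exists (lev x - lev t).-1.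
by rewrite mem_ch -iterS k_eq iter_tx.
Qed.

Definition in_subb x t := (lev t <= lev x)%N && (iter (lev x - lev t) par t == x).

Lemma in_subP x t : reflect (in_sub x t) (in_subb x t).
Proof.
apply: (iffP andP) => [[_ /eqP]|/in_sub_lev [-> ->]]; last by [].
by exists (lev x - lev t)%N.
Qed.

End LevelTree.

Arguments in_sub_refl {V} par x.
Arguments not_in_sub_par {V par lev ch} Htree x.

Section JacobiMatrix.
Variables (R : fieldType) (V : eqType) (par : V -> V) (lev : V -> nat).
Variables (ch : V -> seq V) (lam beta : V -> R).
Hypothesis Htree : level_tree par lev ch.
Hypothesis lam_neq0 : forall x, lam x != 0.

Local Notation in_sub := (in_sub par).
Local Notation P := (P par lev ch lam beta).

Lemma P_lcm x : P x x = mlcm [seq P y x | y <- ch x].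
Proof.
case Hx: (lev x) => [|m]; first by rewrite (ch_lev0 Htree Hx) mlcm_nil /P Hx /= eqxx.
rewrite {1}/P Hx /= eqxx; congr mlcm; apply/eq_in_map => y yc.
by rewrite /P; have := lev_ch Htree yc; rewrite Hx => -[->].
Qed.

Lemma P_dvd x y : y \in ch x -> P y x %| P x x.
Proof. by move=> yc; rewrite P_lcm; apply/mlcm_dvd/map_f. Qed.

Lemma P_par x :
  P x (par x) = (lam x)^-1 *: (('X - (beta x)%:P) * P x x
                               - \sum_(y <- ch x) lam y *: P x y).
Proof.
rewrite /P; case Hx: (lev x) => [|m] /=.
  by rewrite (ch_lev0 Htree Hx) big_nil (negbTE (par_neq Htree x)) !eqxx mulr1 subr0.
rewrite (negbTE (par_neq Htree x)) !eqxx; congr (_ *: (_ - _)).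
apply: eq_big_seq => y yc; have := lev_ch Htree yc; rewrite Hx => -[ly].
have yx : y != x by apply/eqP => E; move: ly; rewrite E Hx; lia.
have ypx : y != par x by apply/eqP => E; move: ly; rewrite E (lev_par Htree) Hx; lia.
by rewrite (negbTE yx) (negbTE ypx) ly subnn.
Qed.

Lemma P_child x y u :
  y \in ch x -> in_sub y u \/ u = x -> P x u = (P x x %/ P y x) * P y u.
Proof.
move=> yc [yu|->]; last by rewrite divpK ?P_dvd.
have ly := lev_ch Htree yc; have [le_uy iter_uy] := in_sub_lev Htree yu.
have ux : u != x by apply/eqP => E; move: le_uy; rewrite E ly; lia.
have upx : u != par x.
  by apply/eqP => E; move: le_uy; rewrite E (lev_par Htree) ly; lia.
rewrite divp_mulAC ?P_dvd // {1}/P ly /= (negbTE ux) (negbTE upx) iter_uy.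
congr (_ * _ %/ _); rewrite P_lcm; congr mlcm; apply/eq_in_map => z zc.
by rewrite /P; have := lev_ch Htree zc; rewrite ly => -[->].
Qed.

Lemma P_jacobi_root x :
  beta x *: P x x + \sum_(s <- ch x) lam s *: P x s + lam x *: P x (par x)
  = 'X * P x x.
Proof.
rewrite P_par scalerA mulfV // scale1r -[beta x *: _]mul_polyC.
set S := \sum_(_ <- _) _; ring.
Qed.

Lemma P_jacobi x t : in_sub x t ->
  beta t *: P x t + \sum_(s <- ch t) lam s *: P x s + lam t *: P x (par t)
  = 'X * P x t.
Proof.
have [n] := ubnP (lev x); elim: n x t => // n IH x t /ltnSE le_xn xt.
have [->|tx] := eqVneq t x; first exact: P_jacobi_root.
have [y yc yt] := in_sub_child Htree xt tx.
have lt_yn : (lev y < n)%N by move: le_xn; rewrite (lev_ch Htree yc).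
have Pxy u := @P_child x y u yc.
have Ppar : P x (par t) = (P x x %/ P y x) * P y (par t).
  apply: Pxy; have [->|ty] := eqVneq t y; last by left; apply: in_sub_parW.
  by right; apply/eqP; rewrite -(mem_ch Htree).
rewrite Ppar Pxy; last by left.
rewrite (eq_big_seq (fun s => lam s *: ((P x x %/ P y x) * P y s))); last first.
  move=> s; rewrite (mem_ch Htree) => /eqP pst.
  by rewrite Pxy //; left; apply: in_sub_par; rewrite pst.
under eq_bigr do rewrite scalerAr.
by rewrite -mulr_sumr !scalerAr -!mulrDr IH // mulrCA.
Qed.

Definition jacobi_eq r (w : V -> R) t :=
  beta t * w t + \sum_(s <- ch t) lam s * w s + lam t * w (par t) = r * w t.

(* The Jacobi equation is imposed at x in full: it agrees with J_x there since
   w vanishes at x'. *)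
Definition Jx_eigen_eq x r (w : V -> R) :=
  (forall t, ~ in_sub x t -> w t = 0) /\ (forall t, in_sub x t -> jacobi_eq r w t).

Lemma eigenvalue_JxP x r : eigenvalue_Jx par ch lam beta x r ->
  exists2 w, Jx_eigen_eq x r w & exists t, in_sub x t /\ w t != 0.
Proof.
case=> w [w0 [nz Ew]]; exists w => //; split => // t xt.
rewrite /jacobi_eq -(Ew t xt); case: eqP => [->|_] //.
by rewrite (w0 (par x) (not_in_sub_par Htree x)) !mulr0.
Qed.

Lemma P_horner_jacobi x r t : in_sub x t -> jacobi_eq r (fun u => (P x u).[r]) t.
Proof.
move=> xt; have /(congr1 (horner^~ r)) := P_jacobi xt.
rewrite !hornerD !hornerZ horner_sum hornerM hornerX /jacobi_eq => <-.
by congr (_ + _ + _); apply: eq_bigr => s _; rewrite hornerZ.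
Qed.

Definition wronskian (v w : V -> R) t := lam t * (v (par t) * w t - w (par t) * v t).

Lemma wronskian_ch r v w t : jacobi_eq r v t -> jacobi_eq r w t ->
  wronskian v w t = \sum_(s <- ch t) wronskian v w s.
Proof.
rewrite /jacobi_eq /wronskian => Ev Ew.
rewrite (eq_big_seq (fun s => lam s * (v t * w s - w t * v s))); last first.
  by move=> s; rewrite (mem_ch Htree) => /eqP ->.
have -> : \sum_(s <- ch t) lam s * (v t * w s - w t * v s) =
    v t * \sum_(s <- ch t) lam s * w s - w t * \sum_(s <- ch t) lam s * v s.
  by rewrite !mulr_sumr -sumrB; apply: eq_bigr => s _; ring.
transitivity (lam t * v (par t) * w t - lam t * w (par t) * v t); first ring.
have -> : lam t * v (par t) = r * v t - beta t * v t - \sum_(s <- ch t) lam s * v s.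
  by rewrite -Ev; ring.
have -> : lam t * w (par t) = r * w t - beta t * w t - \sum_(s <- ch t) lam s * w s.
  by rewrite -Ew; ring.
ring.
Qed.

Lemma wronskian_eq0 x r v w :
  (forall t, in_sub x t -> jacobi_eq r v t) ->
  (forall t, in_sub x t -> jacobi_eq r w t) ->
  forall t, in_sub x t -> wronskian v w t = 0.
Proof.
move=> Ev Ew t; move Hn: (lev t) => n.
elim: n t Hn => [|n IH] t lt xt; rewrite (wronskian_ch (Ev t xt) (Ew t xt)).
  by rewrite (ch_lev0 Htree lt) big_nil.
apply: big1_seq => s /andP [_]; rewrite (mem_ch Htree) => /eqP pst.
apply: IH; last by apply: in_sub_par; rewrite pst.
by apply/succn_inj; rewrite -lt -pst (lev_par Htree).
Qed.

Lemma Jx_root x r w : Jx_eigen_eq x r w -> w x != 0 -> (P x (par x)).[r] = 0.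
Proof.
case=> w0 Ew wx.
have := wronskian_eq0 (@P_horner_jacobi x r) Ew (in_sub_refl par x).
rewrite /wronskian (w0 (par x) (not_in_sub_par Htree x)) mul0r subr0.
by move/eqP; rewrite !mulf_eq0 (negbTE (lam_neq0 x)) (negbTE wx) orbF => /eqP.
Qed.

Definition restr y (w : V -> R) u := if in_subb par lev y u then w u else 0.

Lemma restr_in y w u : in_sub y u -> restr y w u = w u.
Proof. by rewrite /restr => /(in_subP Htree) ->. Qed.

Lemma restr_out y w u : ~ in_sub y u -> restr y w u = 0.
Proof. by rewrite /restr; case: (in_subP Htree). Qed.

Lemma Jx_eigen_eq_restr x r w y :
  Jx_eigen_eq x r w -> w x = 0 -> y \in ch x -> Jx_eigen_eq y r (restr y w).
Proof.
case=> _ Ew wx yc; split=> [t|t yt]; first exact: restr_out.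
have pyx : par y = x by apply/eqP; rewrite -(mem_ch Htree).
have xt := in_sub_trans (in_sub_ch Htree yc) yt.
have := Ew t xt; rewrite /jacobi_eq restr_in // => <-; congr (_ + _ + _).
  apply: eq_big_seq => s; rewrite (mem_ch Htree) => /eqP pst.
  by rewrite restr_in //; apply: in_sub_par; rewrite pst.
have [->|ty] := eqVneq t y; last by rewrite restr_in //; apply: in_sub_parW.
by rewrite pyx wx restr_out // -{1}pyx; apply: not_in_sub_par Htree y.
Qed.

Lemma Jx_descend x r w :
  Jx_eigen_eq x r w -> w x = 0 -> (exists t, in_sub x t /\ w t != 0) ->
  exists y y1 y2 : V,
    in_sub x y /\ y1 \in ch y /\ y2 \in ch y /\ y1 != y2 /\
    (P y1 y).[r] = 0 /\ (P y2 y).[r] = 0.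
Proof.
have [n] := ubnP (lev x); elim: n x w => // n IH x w /ltnSE le_xn Ex wx [t [xt wt]].
have tx : t != x by apply: contraNneq wt => ->; rewrite wx.
have [y yc yt] := in_sub_child Htree xt tx.
have root s : s \in ch x -> w s != 0 -> (P s x).[r] = 0.
  move=> sc ws; have /eqP <- : par s == x by rewrite -(mem_ch Htree).
  apply: Jx_root (Jx_eigen_eq_restr Ex wx sc) _.
  by rewrite restr_in //; apply: in_sub_refl.
have [wy0|wy] := eqVneq (w y) 0.
  have lt_yn : (lev y < n)%N by move: le_xn; rewrite (lev_ch Htree yc).
  have Ey := Jx_eigen_eq_restr Ex wx yc.
  have wyy : restr y w y = 0 by rewrite restr_in //; apply: in_sub_refl.
  have nzy : exists t, in_sub y t /\ restr y w t != 0 by exists t; rewrite restr_in.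
  have [z [y1 [y2 [yz rest]]]] := IH y _ lt_yn Ey wyy nzy.
  by exists z, y1, y2; split=> //; apply: in_sub_trans (in_sub_ch Htree yc) yz.
have sum0 : \sum_(s <- ch x) lam s * w s = 0.
  have := Ex.2 x (in_sub_refl par x).
  by rewrite /jacobi_eq wx (Ex.1 _ (not_in_sub_par Htree x)) !mulr0 add0r addr0.
have [y2 y2c /andP [y2y lw2]] :=
  sum_seq_eq0_other (uniq_ch Htree x) yc sum0 (mulf_neq0 (lam_neq0 y) wy).
have wy2 : w y2 != 0 by apply: contraNneq lw2 => ->; rewrite mulr0.
exists x, y, y2; do !split => //; first exact: in_sub_refl.
- by rewrite eq_sym.
- exact: root.
- exact: root.
Qed.

End JacobiMatrix.

Theorem theorem2 (R : rcfType) (V : eqType) (par : V -> V) (lev : V -> nat)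
    (ch : V -> seq V) (lam beta : V -> R)
    (Htree : level_tree par lev ch)
    (Hlam : forall x, 0 < lam x)
    (x : V) (r : R)
    (Heig : eigenvalue_Jx par ch lam beta x r) :
  (P par lev ch lam beta x (par x)).[r] = 0 \/
  exists y y1 y2 : V,
    in_sub par x y /\ y1 \in ch y /\ y2 \in ch y /\ y1 != y2 /\
    (P par lev ch lam beta y1 y).[r] = 0 /\
    (P par lev ch lam beta y2 y).[r] = 0.
Proof.
have lam_neq0 z : lam z != 0 by rewrite gt_eqF.
have [w Ew nz] := eigenvalue_JxP Htree Heig.
have [wx|wx] := eqVneq (w x) 0.
  by right; exact: (Jx_descend Htree lam_neq0 Ew wx nz).
by left; exact: (Jx_root Htree lam_neq0 Ew wx).
Qed.
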